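(* Let $d\ge 1$ and $1\le n\le m$ be integers, and let $P_m$ denote the set of all $m$-outcome POVMs $\mathcal{M}=\{M_b\}_{b=1}^m$ on $\mathbb{C}^d$. Let $F\subseteq P_m$ be the set of $m$-outcome POVMs that can be simulated by $n$-outcome POVMs, i.e. those $\mathcal{O}=\{O_b\}$ of the form $O_b=\sum_{a,x}p(x)\,p(b|a,x)\,Q_{a|x}$, where for each $x$ the family $\{Q_{a|x}\}_{a=1}^n$ is an $n$-outcome POVM, $p(x)$ is a probability distribution and $p(b|a,x)$ are conditional probabilities. For $\mathcal{M}\in P_m$ define the robustness $$R_F(\mathcal{M})=\min\Big\{t\ge 0 \;\Big|\; \exists\,\mathcal{N}=\{N_b\}\in P_m:\ \Big\{\tfrac{M_b+tN_b}{1+t}\Big\}_b\in F\Big\}.$$ Then $$\max_{\mathcal{M}\in P_m}\big(1+R_F(\mathcal{M})\big)\le \frac{m}{n},$$ and this inequality holds with equality when $d\ge m$.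
   Context: A POVM with $k$ outcomes on $\mathbb{C}^d$ is a family of $k$ positive semidefinite operators summing to the identity. *)

(* Complex numbers are R[i] = complex R over an arbitrary
   real closed field R (for R = the reals this is the usual C). *)
From HB Require Import structures.
From mathcomp Require Import all_boot all_order all_algebra.
From mathcomp Require Import complex.
Set Implicit Arguments. Unset Strict Implicit. Unset Printing Implicit Defensive.
Import Order.TTheory GRing.Theory Num.Theory.
Local Open Scope ring_scope.

Definition adjmx (R : rcfType) (p q : nat) (A : 'M[R[i]]_(p, q)) : 'M[R[i]]_(q, p) :=
  (map_mx Num.conj A)^T.

Definition psd (R : rcfType) (d : nat) (A : 'M[R[i]]_d) : Prop :=
  adjmx A = A /\ forall v : 'cV[R[i]]_d, 0 <= (adjmx v *m A *m v) 0 0.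

Definition POVM (R : rcfType) (d k : nat) (M : 'I_k -> 'M[R[i]]_d) : Prop :=
  (forall b, psd (M b)) /\ \sum_(b < k) M b = 1%:M.

Definition simulable (R : rcfType) (d n m : nat) (O : 'I_m -> 'M[R[i]]_d) : Prop :=
  exists (K : nat) (p : 'I_K -> R) (Q : 'I_K -> 'I_n -> 'M[R[i]]_d)
         (q : 'I_K -> 'I_n -> 'I_m -> R),
    [/\ (forall x, 0 <= p x), \sum_(x < K) p x = 1,
        (forall x, POVM (Q x)) /\
        (forall x a b, 0 <= q x a b),
        (forall x a, \sum_(b < m) q x a b = 1) &
        (forall b, O b = \sum_(x < K) \sum_(a < n) ((p x * q x a b)%:C)%C *: Q x a)].

Definition robust_feasible (R : rcfType) (d n m : nat) (M : 'I_m -> 'M[R[i]]_d)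
    (t : R) : Prop :=
  0 <= t /\ exists N : 'I_m -> 'M[R[i]]_d,
    POVM N /\ simulable n (fun b => ((1 + t)^-1)%:C%C *: (M b + t%:C%C *: N b)).

From mathcomp Require Import all_boot all_order all_algebra.
From mathcomp Require Import complex ring.
Set Implicit Arguments. Unset Strict Implicit. Unset Printing Implicit Defensive.
Import Order.TTheory GRing.Theory Num.Theory.
Local Open Scope ring_scope.

(* Upper bound: if S is simulable and S_b >= r M_b for all b (0 < r < 1), then
   N_b = (S_b - r M_b) / (1 - r) is a POVM and (M_b + t N_b) / (1 + t) = S_b for
   t = 1/r - 1.  Such an S with r = n/m is obtained by averaging over the m cyclic
   shifts x the n-outcome coarse-graining of M that keeps the outcomes
   x, ..., x + n - 2 and merges all the others into x + n - 1: outcome b is kept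
   intact for the n shifts with b - x < n.
   Lower bound: take the projective POVM with M_b e_b = e_b (possible as d >= m).
   Each (M_b + t N_b) / (1 + t) has entry at least 1 / (1 + t) at (e_b, e_b),
   whereas for any simulable O these m diagonal entries sum to at most n, because
   the entries of an n-outcome POVM are at most 1 and each simulating POVM is
   relabelled stochastically. *)

Section PositiveSemidefinite.

Variables (R : rcfType) (d : nat).
Implicit Types (A B : 'M[R[i]]_d) (z : R[i]).

Lemma adjmxD A B : adjmx (A + B) = adjmx A + adjmx B.
Proof. by apply/matrixP=> i j; rewrite !mxE rmorphD. Qed.

Lemma adjmxZ z A : z \is Num.real -> adjmx (z *: A) = z *: adjmx A.
Proof.
by move=> zr; apply/matrixP=> i j; rewrite !mxE -{2}(conj_Creal zr) rmorphM.
Qed.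

Lemma psd0 : psd (0 : 'M[R[i]]_d).
Proof.
split=> [|v]; first by apply/matrixP=> i j; rewrite !mxE rmorph0.
by rewrite mulmx0 mul0mx mxE.
Qed.

Lemma psdD A B : psd A -> psd B -> psd (A + B).
Proof.
move=> [hA pA] [hB pB]; split; first by rewrite adjmxD hA hB.
by move=> v; rewrite mulmxDr mulmxDl mxE addr_ge0.
Qed.

Lemma psdZ z A : 0 <= z -> psd A -> psd (z *: A).
Proof.
move=> z0 [hA pA]; split; first by rewrite adjmxZ ?hA ?realE ?z0.
by move=> v; rewrite -scalemxAr -scalemxAl mxE mulr_ge0.
Qed.

Lemma psd_sum (I : Type) (r : seq I) (P : pred I) (F : I -> 'M[R[i]]_d) :
  (forall i, P i -> psd (F i)) -> psd (\sum_(i <- r | P i) F i).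
Proof.
move=> Fpsd; elim/big_rec: _ => [|i x Pi xpsd]; first exact: psd0.
exact: psdD (Fpsd i Pi) xpsd.
Qed.

Lemma psd_diag_ge0 A i : psd A -> 0 <= A i i.
Proof.
move=> [_ pA]; have := pA (delta_mx i 0).
have -> : adjmx (delta_mx i (0 : 'I_1)) = delta_mx 0 i :> 'M[R[i]]_(1, d).
  by apply/matrixP=> a b; rewrite !mxE rmorph_nat; case: eqP; case: eqP.
by rewrite -rowE -colE !mxE.
Qed.

Lemma psd_sumZ_subZ (k : nat) (M : 'I_k -> 'M[R[i]]_d) (w : 'I_k -> R[i]) b z :
  (forall c, psd (M c)) -> (forall c, 0 <= w c) -> z <= w b ->
  psd (\sum_c w c *: M c - z *: M b).
Proof.
move=> Mpsd w_ge0 zw; rewrite (bigD1 b) //= addrAC -scalerBl.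
apply: psdD; first by apply: psdZ => //; rewrite subr_ge0.
by apply: psd_sum => c _; apply: psdZ.
Qed.

End PositiveSemidefinite.

Section POVMs.

Variables (R : rcfType) (d k : nat).
Implicit Type M : 'I_k -> 'M[R[i]]_d.

Lemma POVM_diag_le1 M b i : POVM M -> M b i i <= 1.
Proof.
move=> [Mpsd Msum]; have := congr1 (fun A : 'M_d => A i i) Msum.
rewrite summxE mxE eqxx mulr1n => <-.
by rewrite (bigD1 b) //= lerDl sumr_ge0 // => c _; apply: psd_diag_ge0.
Qed.

Lemma POVM_coarse_grain (n : nat) (f : 'I_k -> 'I_n) M :
  POVM M -> POVM (fun a => \sum_(c | f c == a) M c).
Proof.
move=> [Mpsd Msum]; split; first by move=> a; apply: psd_sum.
by rewrite -Msum (partition_big f xpredT).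
Qed.

Lemma POVM_diag_indicator (f : 'I_d -> 'I_k) :
  POVM (fun b => diag_mx (\row_i ((f i == b)%:R : R[i]))).
Proof.
split=> [b|].
  split=> [|v].
    apply/matrixP=> i j; rewrite !mxE rmorphMn rmorph_nat.
    by case: (eqVneq i j) => [->|ij]; rewrite ?eqxx // eq_sym (negPf ij).
  rewrite mul_mx_diag mxE; apply: sumr_ge0 => j _.
  by rewrite !mxE mulrC mulrA mulrC mulr_ge0 ?ler0n ?mul_conjC_ge0.
apply/matrixP=> i j; rewrite summxE [RHS]mxE.
under eq_bigr do rewrite !mxE.
rewrite sumrMnl (bigD1 (f i)) //= eqxx big1 ?addr0 // => b /negPf.
by rewrite eq_sym => ->.
Qed.

End POVMs.

Section Simulation.

Variables (R : rcfType) (d n m : nat).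
Implicit Types (M O S : 'I_m -> 'M[R[i]]_d).

Lemma simulable_ext O1 O2 :
  (forall b, O1 b = O2 b) -> simulable n O1 -> simulable n O2.
Proof.
move=> eqO [K [p [Q [q [p_ge0 p_sum QP q_sum Oeq]]]]].
by exists K, p, Q, q; split=> // b; rewrite -eqO.
Qed.

Lemma simulable_POVM O : simulable n O -> POVM O.
Proof.
case=> K [p [Q [q [p_ge0 p_sum [QP q_ge0] q_sum Oeq]]]]; split.
  move=> b; rewrite Oeq; apply: psd_sum => x _; apply: psd_sum => a _.
  by apply: psdZ; [rewrite lecR mulr_ge0 | case: (QP x)].
under eq_bigr do rewrite Oeq.
rewrite exchange_big /=.
under eq_bigr => x _.
  rewrite exchange_big /=.
  under eq_bigr do rewrite -scaler_suml -rmorph_sum -mulr_sumr q_sum mulr1.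
  rewrite -scaler_sumr (proj2 (QP x)).
  over.
by rewrite -scaler_suml -rmorph_sum p_sum rmorph1 scale1r.
Qed.

Lemma simulable_diag_sum_le O (e : 'I_m -> 'I_d) :
  simulable n O -> \sum_b O b (e b) (e b) <= n%:R.
Proof.
case=> K [p [Q [q [p_ge0 p_sum [QP q_ge0] q_sum Oeq]]]].
have weights : \sum_b \sum_x \sum_a p x * q x a b = n%:R :> R.
  rewrite exchange_big /=.
  under eq_bigr do rewrite exchange_big /=.
  under eq_bigr do under eq_bigr do rewrite -mulr_sumr q_sum mulr1.
  by under eq_bigr do rewrite sumr_const card_ord; rewrite sumrMnl p_sum.
rewrite -[n%:R](rmorph_nat (real_complex R)) -weights !rmorph_sum.
apply: ler_sum => b _.
rewrite Oeq summxE rmorph_sum ler_sum // => x _.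
rewrite summxE rmorph_sum ler_sum // => a _.
rewrite mxE -[X in _ <= X]mulr1 ler_wpM2l ?lecR ?mulr_ge0 //.
exact: POVM_diag_le1.
Qed.

Lemma simulable_self M : POVM M -> simulable m M.
Proof.
move=> MP; exists 1%N, (fun _ => 1), (fun _ => M), (fun _ a b => (a == b)%:R).
split.
- by move=> _; apply: ler01.
- by rewrite big_ord1.
- by split=> // *; apply: ler0n.
- move=> _ a; rewrite (bigD1 a) //= eqxx big1 ?addr0 // => b /negPf.
  by rewrite eq_sym => ->.
- move=> b; rewrite big_ord1 (bigD1 b) //= eqxx mul1r scale1r big1 ?addr0 //.
  by move=> a /negPf ->; rewrite mulr0 rmorph0 scale0r.
Qed.

Lemma robust_feasible_dominated M S (r : R) :
  0 < r < 1 -> POVM M -> simulable n S -> (forall b, psd (S b - r%:C%C *: M b)) ->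
  robust_feasible n M (r^-1 - 1).
Proof.
case/andP=> r_gt0 r_lt1 [_ Msum] Ssim dom.
have r_neq0 : r != 0 by rewrite gt_eqF.
have r_neq1 : 1 - r != 0 by rewrite subr_eq0 eq_sym lt_eqF.
pose N b := ((1 - r)^-1)%:C%C *: (S b - r%:C%C *: M b).
split; first by rewrite subr_ge0 invf_ge1 ?ltW.
exists N; split.
  split=> [b|]; first by apply: psdZ (dom b); rewrite lecR invr_ge0 subr_ge0 ltW.
  rewrite -scaler_sumr sumrB -scaler_sumr Msum (proj2 (simulable_POVM Ssim)).
  have -> : 1%:M - r%:C%C *: 1%:M = (1 - r)%:C%C *: 1%:M :> 'M[R[i]]_d.
    by rewrite rmorphB rmorph1 scalerBl scale1r.
  by rewrite scalerA -rmorphM mulVf // rmorph1 scale1r.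
apply: simulable_ext Ssim => b; rewrite addrC subrK invrK /N.
rewrite scalerDr !scalerA -!rmorphM.
have -> : r * (r^-1 - 1) * (1 - r)^-1 = 1 by field; rewrite r_neq0 r_neq1.
by rewrite rmorph1 scale1r addrC subrK.
Qed.

End Simulation.

Section ShiftSimulation.

Variables (R : rcfType) (d n m : nat) (M : 'I_m.+1 -> 'M[R[i]]_d).
Hypotheses (MP : POVM M) (le_nm : (n <= m)%N).

Definition shift_outcome (x c : 'I_m.+1) : 'I_n.+1 :=
  inord (minn (val (c - x)%R) n).

Definition shift_label (x : 'I_m.+1) (a : 'I_n.+1) : 'I_m.+1 := x + inord a.

Definition shift_povm (x : 'I_m.+1) (a : 'I_n.+1) : 'M[R[i]]_d :=
  \sum_(c | shift_outcome x c == a) M c.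

Definition shift_sim (b : 'I_m.+1) : 'M[R[i]]_d :=
  \sum_x \sum_a
    ((m.+1%:R^-1 * (shift_label x a == b)%:R : R)%:C%C) *: shift_povm x a.

Definition shift_weight (b c : 'I_m.+1) : R :=
  \sum_x m.+1%:R^-1 * (shift_label x (shift_outcome x c) == b)%:R.

Lemma shift_label_outcome (x c : 'I_m.+1) :
  (val (c - x)%R < n.+1)%N -> shift_label x (shift_outcome x c) = c.
Proof.
move=> lt_cx; have min_cx : minn (val (c - x)%R) n = val (c - x)%R.
  by apply/minn_idPl; rewrite -ltnS.
by rewrite /shift_label /shift_outcome min_cx inordK // inord_val addrC subrK.
Qed.

Lemma shift_sim_simulable : simulable n.+1 shift_sim.
Proof.
exists m.+1, (fun _ => m.+1%:R^-1), shift_povm.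
exists (fun x a b => (shift_label x a == b)%:R).
split=> //.
- by move=> _; rewrite invr_ge0 ler0n.
- by rewrite sumr_const card_ord -[_ *+ m.+1]mulr_natr mulVf ?pnatr_eq0.
- by split=> [x|*]; [apply: POVM_coarse_grain | apply: ler0n].
- move=> x a; rewrite (bigD1 (shift_label x a)) //= eqxx big1 ?addr0 //.
  by move=> b /negPf; rewrite eq_sym => ->.
Qed.

Lemma shift_sim_expand b : shift_sim b = \sum_c (shift_weight b c)%:C%C *: M c.
Proof.
under [RHS]eq_bigr do rewrite /shift_weight rmorph_sum scaler_suml.
rewrite [RHS]exchange_big; apply: eq_bigr => x _ /=.
rewrite [RHS](partition_big (shift_outcome x) xpredT) //=.
apply: eq_bigr => a _; rewrite scaler_sumr.
by apply: eq_big => [c|c /eqP <-].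
Qed.

Lemma shift_weight_ge b : n.+1%:R / m.+1%:R <= shift_weight b b.
Proof.
have count_small : \sum_(j < m.+1) ((j < n.+1)%N%:R : R) = n.+1%:R.
  transitivity (\sum_(j < m.+1 | (j < n.+1)%N) (1 : R)).
    by rewrite [RHS]big_mkcond; apply: eq_bigr => j _; case: ifP.
  rewrite -(big_ord_widen _ (fun _ => 1 : R) (le_nm : (n.+1 <= m.+1)%N)).
  by rewrite sumr_const card_ord.
rewrite mulrC -count_small mulr_sumr (reindex_inj (subrI b)) ler_sum // => x _.
rewrite ler_wpM2l ?invr_ge0 ?ler0n //.
by case: ltnP => [/shift_label_outcome -> | _]; rewrite ?eqxx ?ler0n.
Qed.

Lemma shift_sim_dominates b : psd (shift_sim b - (n.+1%:R / m.+1%:R)%:C%C *: M b).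
Proof.
rewrite shift_sim_expand; apply: psd_sumZ_subZ; first by case: MP.
  by move=> c; rewrite lecR sumr_ge0 // => x _; rewrite mulr_ge0 ?invr_ge0 ?ler0n.
by rewrite lecR shift_weight_ge.
Qed.

End ShiftSimulation.

Lemma robustness_le_ratio (R : rcfType) (d n m : nat) (M : 'I_m -> 'M[R[i]]_d) :
  (0 < n)%N -> (n <= m)%N -> POVM M ->
  exists t : R, robust_feasible n M t /\ 1 + t <= m%:R / n%:R.
Proof.
move=> n_gt0 le_nm MP.
case: (ltnP n m) le_nm => [lt_nm _ | le_mn le_nm]; last first.
  have eq_nm : n = m by apply/eqP; rewrite eqn_leq le_nm le_mn.
  subst n.
  exists 0; split; last by rewrite addr0 divff ?pnatr_eq0 -?lt0n.
  split=> //; exists M; split=> //.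
  apply: simulable_ext (simulable_self MP) => b.
  by rewrite addr0 invr1 rmorph1 scale1r rmorph0 scale0r addr0.
case: n n_gt0 lt_nm => // n _; case: m M MP => // m M MP lt_nm.
have r_bounds : 0 < (n.+1%:R / m.+1%:R : R) < 1.
  by rewrite divr_gt0 ?ltr0n // ltr_pdivrMr ?ltr0n // mul1r ltr_nat.
exists ((n.+1%:R / m.+1%:R)^-1 - 1); split; last by rewrite addrC subrK invf_div.
exact: robust_feasible_dominated r_bounds MP (shift_sim_simulable n MP)
  (shift_sim_dominates MP (ltnW lt_nm)).
Qed.

Lemma robustness_ge_ratio (R : rcfType) (d n m : nat) :
  (0 < n)%N -> (m.+1 <= d)%N ->
  exists M : 'I_m.+1 -> 'M[R[i]]_d, POVM M /\
    forall t : R, robust_feasible n M t -> m.+1%:R / n%:R <= 1 + t.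
Proof.
move=> n_gt0 le_md.
pose outcome (i : 'I_d) : 'I_m.+1 := inord (minn i m).
pose basis (b : 'I_m.+1) : 'I_d := widen_ord le_md b.
have outcome_basis b : outcome (basis b) = b.
  have min_b : minn b m = b by apply/minn_idPl; rewrite -ltnS.
  by apply: val_inj; rewrite /outcome /= min_b inordK.
pose M b := diag_mx (\row_i ((outcome i == b)%:R : R[i])).
exists M; split=> [|t [t_ge0 [N [[Npsd _] Osim]]]].
  exact: POVM_diag_indicator.
have t1_gt0 : 0 < 1 + t by rewrite ltr_pwDl.
have diag_ge b : ((1 + t)^-1)%:C%C <=
    (((1 + t)^-1)%:C%C *: (M b + t%:C%C *: N b)) (basis b) (basis b).
  rewrite /M !mxE outcome_basis eqxx mulr1n -[X in X <= _]mulr1.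
  rewrite ler_wpM2l ?lecR ?invr_ge0 ?(ltW t1_gt0) // eqxx lerDl mulr_ge0 ?lecR //.
  exact: psd_diag_ge0 (Npsd b).
have := le_trans (ler_sum _ (fun b _ => diag_ge b))
  (simulable_diag_sum_le basis Osim).
rewrite sumr_const card_ord -[_ *+ m.+1]mulr_natl.
have natC k : (k%:R : R[i]) = (k%:R : R)%:C%C by rewrite rmorph_nat.
rewrite !natC -rmorphM lecR ler_pdivrMr // => le_mn.
by rewrite ler_pdivrMr ?ltr0n // mulrC.
Qed.

Theorem proposition1 (R : rcfType) (d n m : nat) :
  (1 <= d)%N -> (1 <= n)%N -> (n <= m)%N ->
  (* max_M (1 + R_F(M)) <= m/n : every POVM has a feasible t with 1 + t <= m/n *)
  (forall M : 'I_m -> 'M[R[i]]_d, POVM M ->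
     exists t : R, robust_feasible n M t /\ 1 + t <= m%:R / n%:R)
  /\
  (* equality when d >= m : some POVM has 1 + t >= m/n for all feasible t *)
  ((m <= d)%N ->
     exists M : 'I_m -> 'M[R[i]]_d, POVM M /\
       forall t : R, robust_feasible n M t -> m%:R / n%:R <= 1 + t).
Proof.
move=> _ n_gt0 le_nm; split=> [M|]; first exact: robustness_le_ratio.
case: m le_nm => [|m] le_nm le_md; first by case: n n_gt0 le_nm.
exact: robustness_ge_ratio.
Qed.
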